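(* Let $R$ be a finite group, let $S\subseteq R$ and let $K,H$ be subgroups with $1<K<H<R$. Suppose that (1) $K$ is characteristic in $R$, (2) $K$ is maximal in $H$, (3) $K(S\setminus H)=S\setminus H$, and (4) $K(S\setminus K)\neq S\setminus K$. Then $\mathrm{Aut}(R)_S$ normalises $H$ (i.e. every automorphism of $R$ fixing $S$ setwise maps $H$ to itself).
   Context: $\mathrm{Aut}(R)_S$ denotes the group of automorphisms of $R$ that fix the subset $S$ setwise. *)

From mathcomp Require Import all_boot all_fingroup all_solvable.

From mathcomp Require Import all_boot all_fingroup all_solvable.

(* Suppose an automorphism [a] of [R] fixing [S] moved [H].  As [K] is
   characteristic, [a] fixes [K], so [K <= H :&: a @: H < H] and maximality
   forces [H :&: a @: H = K].  Transporting (3) by [a] shows that [S :\: a @: H]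
   is also a union of right cosets of [K]; since every element of [S :\: K]
   lies outside [H] or outside [a @: H], [S :\: K] is a union of right cosets
   of [K] too, contradicting (4). *)

Local Open Scope group_scope.

Section AutStableSets.

Local Set Implicit Arguments.
Local Unset Strict Implicit.

Variable gT : finGroupType.
Implicit Types (A B S : {set gT}) (K H G R : {group gT}).

Lemma perm_imsetD (a : {perm gT}) A B : a @: (A :\: B) = a @: A :\: a @: B.
Proof. by rewrite !(can_imset_pre _ (permK a)) preimsetD. Qed.

Lemma Aut_imsetM R (a : {perm gT}) A B :
  a \in Aut R -> A \subset R -> B \subset R -> a @: (A * B) = a @: A * a @: B.
Proof.
move=> aR sAR sBR.
by rewrite -(autmE aR) -!morphimEsub ?mul_subG // morphimMl.
Qed.

Lemma char_Aut_imset K R (a : {perm gT}) :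
  K \char R -> a \in Aut R -> a @: K = K.
Proof.
rewrite /characteristic => /andP[_ /forall_inP chK] aR.
by apply/eqP; rewrite eqEcard chK // (card_imset _ (@perm_inj _ a)) /=.
Qed.

Lemma Aut_mulg_setD R K (a : {perm gT}) A S :
  a \in Aut R -> K \subset R -> S \subset R -> a @: K = K -> a @: S = S ->
  K * (S :\: A) = S :\: A -> K * (S :\: a @: A) = S :\: a @: A.
Proof.
move=> aR sKR sSR aK aS KSA.
have sSAR : S :\: A \subset R by rewrite (subset_trans (subsetDl S A)).
by rewrite -aS -perm_imsetD -{1}aK -(Aut_imsetM aR) // KSA.
Qed.

Lemma maximal_setI K H G :
  maximal K H -> K \subset G -> ~~ (H \subset G) -> H :&: G = K.
Proof.
move=> maxK sKG nsHG; have /maxgroupP[/andP[sKH _] maxKH] := maxK.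
apply: (maxKH (H :&: G)%G); last by rewrite subsetI sKH.
by rewrite properE subsetIl subsetI subxx.
Qed.

Lemma mulg_setD_setI K A B S :
  A :&: B \subset K -> K * (S :\: A) = S :\: A -> K * (S :\: B) = S :\: B ->
  K * (S :\: K) = S :\: K.
Proof.
move=> sABK KSA KSB; apply/eqP; rewrite eqEsubset mulG_subr andbT.
apply/subsetP=> _ /mulsgP[k x kK /setDP[xS xK] ->].
rewrite inE groupMl // xK /=.
have [xA | xA] := boolP (x \in A).
  have xB : x \notin B.
    by apply: contra xK => xB; apply: (subsetP sABK); rewrite inE xA.
  by have /setDP[] : k * x \in S :\: B by rewrite -KSB mem_mulg // inE xB.
by have /setDP[] : k * x \in S :\: A by rewrite -KSA mem_mulg // inE xA.
Qed.

End AutStableSets.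

Theorem proposition2p4 (gT : finGroupType) (R K H : {group gT}) (S : {set gT})
  (hSR : S \subset R)
  (h1K : [1 gT] \proper K) (hKH : K \proper H) (hHR : H \proper R)
  (hchar : K \char R)
  (hmax : maximal K H)
  (h3 : K * (S :\: H) = S :\: H)
  (h4 : K * (S :\: K) != S :\: K) :
  forall a : {perm gT}, a \in Aut R -> a @: S = S -> a @: H = H.
Proof.
move=> a aR aS; apply/eqP; apply: contraR h4 => aH_neq_H.
have sKH := proper_sub hKH; have sHR := proper_sub hHR.
have aK := char_Aut_imset hchar aR.
have [G aHE] : exists G : {group gT}, a @: H = G.
  by exists (autm aR @* H)%G; rewrite /= morphimEsub // autmE.
have HG : H :&: G = K.
  apply: maximal_setI => //; first by move: (imsetS a sKH); rewrite aK aHE.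
  apply: contra aH_neq_H; rewrite -aHE => sHaH.
  by rewrite eq_sym eqEcard sHaH (card_imset _ (@perm_inj _ a)) /=.
have KSG : K * (S :\: G) = S :\: G.
  by rewrite -aHE (Aut_mulg_setD aR) // (subset_trans sKH).
by apply/eqP; apply: (mulg_setD_setI _ h3 KSG); rewrite HG.
Qed.
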